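(* In the Cournot game described in the context, suppose each $J^i$ is twice continuously differentiable and $p(\sigma)=-D\sigma+d$ with $D\in\mathbb{R}^{V\times V}$, $D\succeq0$, $d\in\mathbb{R}^V$. If the communication matrix $T$ is symmetric ($T=T^\top$), then for every even $\nu\in\mathbb{N}$ the operator $F_\nu(x)=[\nabla_{x^i}J^i(x^i,\sigma^i_\nu(x))]_{i=1}^N$ is strongly monotone on $\mathcal{X}$.
   Context: Cournot game: $N$ firms, $V$ markets (nodes of a directed transportation network with $E$ edges and incidence matrix $B\in\{0,1,-1\}^{V\times E}$). Firm $i$ produces at location $\ell_i$; its strategy is $x^i=[t^i;r^i]\in\mathbb{R}^{E+1}_{\ge0}$ ($t^i_e$ transported on edge $e$, $r^i$ total production); sales $y^i=H^ix^i$ with $H^i=[B,e_{\ell_i}]\in\mathbb{R}^{V\times(E+1)}$. Individual constraint $\mathcal{X}^i=\{x^i\in\mathbb{R}^{E+1}_{\ge0}:x^i\le\bar r^i\mathbf{1}_{E+1},\ H^ix^i\ge0\}$, $\bar r^i>0$; $\mathcal{X}=\mathcal{X}^1\times\dots\times\mathcal{X}^N$. Costs $c^i_e(t)=\beta^i_et-\gamma^i_e(t)$, $a^i(r)=\beta^i_ar-\gamma^i_a(r)$, each $\gamma$ strongly concave, increasing, with maximum derivative smaller than the corresponding $\beta$. $J^i(z_1,z_2)=a^i(r^i)+\sum_ec^i_e(t^i_e)-p(z_2)^\top H^iz_1$, $z_1=x^i$. Communication matrix $T\in[0,1]^{N\times N}$, primitive and doubly stochastic. Local aggregate $\sigma^i_\nu(x)=\sum_j[T^\nu]_{ij}H^jx^j$;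 $\nabla_{x^i}J^i(x^i,\sigma^i_\nu(x))$ is the gradient of $x^i\mapsto J^i(x^i,[T^\nu]_{ii}H^ix^i+\sum_{j\ne i}[T^\nu]_{ij}H^jx^j)$. $D\succeq0$ means $z^\top Dz\ge0$ for all $z$. Strongly monotone: exists $\alpha>0$ with $(F(x)-F(y))^\top(x-y)\ge\alpha\|x-y\|^2$ for all $x,y\in\mathcal{X}$. *)

From HB Require Import structures.
From mathcomp Require Import all_boot all_order all_algebra.
From mathcomp Require Import all_classical all_reals all_analysis.
Set Implicit Arguments. Unset Strict Implicit. Unset Printing Implicit Defensive.
Import Order.TTheory GRing.Theory Num.Theory.
Import numFieldNormedType.Exports.
Local Open Scope ring_scope.

Definition is_incidence (R : realType) (V E : nat) (B : 'M[R]_(V, E)) : Prop :=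
  forall e : 'I_E, exists u v : 'I_V,
    u != v /\ forall w : 'I_V, B w e = (w == v)%:R - (w == u)%:R.

Definition Hmat (R : realType) (V E : nat) (B : 'M[R]_(V, E)) (l : 'I_V)
  : 'M[R]_(V, E + 1) := row_mx B (delta_mx l (ord0 : 'I_1)).

Definition tcomp (R : realType) (E : nat) (x : 'cV[R]_(E + 1)) (e : 'I_E) : R :=
  x (lshift 1 e) ord0.
Definition rcomp (R : realType) (E : nat) (x : 'cV[R]_(E + 1)) : R :=
  x (rshift E (ord0 : 'I_1)) ord0.

Definition Jcost (R : realType) (V E : nat) (B : 'M[R]_(V, E)) (l : 'I_V)
  (betaA : R) (gammaA : R -> R) (betaE : 'I_E -> R) (gammaE : 'I_E -> R -> R)
  (p : 'cV[R]_V -> 'cV[R]_V) (z1 : 'cV[R]_(E + 1)) (z2 : 'cV[R]_V) : R :=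
  (betaA * rcomp z1 - gammaA (rcomp z1))
  + \sum_(e < E) (betaE e * tcomp z1 e - gammaE e (tcomp z1 e))
  - ((p z2)^T *m (Hmat B l *m z1)) ord0 ord0.

Definition grad (R : realType) (n : nat) (f : 'cV[R]_n -> R) (z : 'cV[R]_n)
  : 'cV[R]_n :=
  \col_k (derive1 (fun s : R => f (z + s *: delta_mx k (ord0 : 'I_1))) 0).

Definition local_obj (R : realType) (N V m : nat)
  (J : 'I_N -> 'cV[R]_m -> 'cV[R]_V -> R) (H : 'I_N -> 'M[R]_(V, m))
  (Tn : 'M[R]_N) (x : 'I_N -> 'cV[R]_m) (i : 'I_N) : 'cV[R]_m -> R :=
  fun z => J i z (Tn i i *: (H i *m z)
                  + \sum_(j < N | j != i) Tn i j *: (H j *m x j)).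

Definition Fop (R : realType) (N V m : nat)
  (J : 'I_N -> 'cV[R]_m -> 'cV[R]_V -> R) (H : 'I_N -> 'M[R]_(V, m))
  (Tn : 'M[R]_N) (x : 'I_N -> 'cV[R]_m) : 'I_N -> 'cV[R]_m :=
  fun i => grad (local_obj J H Tn x i) (x i).

Definition feasible (R : realType) (N V m : nat) (H : 'I_N -> 'M[R]_(V, m))
  (rbar : 'I_N -> R) (x : 'I_N -> 'cV[R]_m) : Prop :=
  forall i, (forall k, 0 <= x i k ord0 /\ x i k ord0 <= rbar i)
            /\ (forall v, 0 <= (H i *m x i) v ord0).

Definition strongly_monotone_on (R : realType) (N m : nat)
  (F : ('I_N -> 'cV[R]_m) -> ('I_N -> 'cV[R]_m))
  (X : ('I_N -> 'cV[R]_m) -> Prop) : Prop :=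
  exists2 alpha : R, 0 < alpha &
    forall x y, X x -> X y ->
      alpha * (\sum_(i < N) \sum_(k < m) (x i k ord0 - y i k ord0) ^+ 2)
      <= \sum_(i < N) ((F x i - F y i)^T *m (x i - y i)) ord0 ord0.

Definition twice_cont_diff (R : realType) (g : R -> R) : Prop :=
  (forall t, derivable g t 1) /\ (forall t, derivable (derive1 g) t 1)
  /\ continuous (derive1 (derive1 g)).

Definition strongly_concave_on (R : realType) (g : R -> R) (a b : R) : Prop :=
  exists2 mu : R, 0 < mu &
    forall x y l, a <= x <= b -> a <= y <= b -> 0 <= l <= 1 ->
      l * g x + (1 - l) * g y + mu / 2 * l * (1 - l) * (x - y) ^+ 2
      <= g (l * x + (1 - l) * y).

Definition cost_ok (R : realType) (beta : R) (g : R -> R) (rb : R) : Prop :=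
  [/\ twice_cont_diff g,
      strongly_concave_on g 0 rb,
      (forall s t, 0 <= s -> s < t -> t <= rb -> g s < g t)
    & (forall t, 0 <= t <= rb -> derive1 g t < beta)].

Definition doubly_stochastic (R : realType) (N : nat) (T : 'M[R]_N) : Prop :=
  [/\ forall i j, 0 <= T i j <= 1,
      forall i, \sum_j T i j = 1
    & forall j, \sum_i T i j = 1].

Definition primitive_mx (R : realType) (N : nat) (T : 'M[R]_N) : Prop :=
  (forall i j, 0 <= T i j) /\ exists k : nat, forall i j, 0 < (T ^+ k) i j.

Definition psd (R : realType) (V : nat) (D : 'M[R]_V) : Prop :=
  forall z : 'cV[R]_V, 0 <= (z^T *m D *m z) ord0 ord0.

(* Pairing F_nu(x) - F_nu(y) with x - y splits, player by player, into a separable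
   part sum_k (gamma_k'(y_k) - gamma_k'(x_k)) (x_k - y_k), bounded below by
   alpha |x_k - y_k|^2 by strong concavity of the finitely many gamma's, and a coupling
   part coming from the affine price: with u^i = H^i (x^i - y^i),
     sum_i [T^nu]_ii (u^i)^T D u^i + sum_(i,j) [T^nu]_ij (u^i)^T D u^j.
   For symmetric T and even nu, T^nu = M^T M with M = T^(nu/2); hence the diagonal
   weights are nonnegative and the double sum equals sum_k w_k^T D w_k >= 0 with
   w_k = sum_i M_ki u^i. *)

From HB Require Import structures.
From mathcomp Require Import all_boot all_order all_algebra.
From mathcomp Require Import all_classical all_reals all_analysis.
From mathcomp Require Import ring lra.
Import Order.TTheory GRing.Theory Num.Theory.
Import numFieldNormedType.Exports.

Set Implicit Arguments. Unset Strict Implicit.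
Local Open Scope ring_scope.
Local Open Scope classical_set_scope.
Local Notation "''[' u , v ]" := ((u^T *m v) 0 0) (format "''[' u ,  v ]").

Section DotProduct.
Variable R : comPzRingType.

Lemma dotC n (u v : 'cV[R]_n) : '[u, v] = '[v, u].
Proof. by rewrite -[v^T *m u]trmxK trmx_mul trmxK [in RHS]mxE. Qed.

Lemma dot_trmxl m n (A : 'M[R]_(m, n)) (u : 'cV[R]_m) (v : 'cV[R]_n) :
  '[A^T *m u, v] = '[u, A *m v].
Proof. by rewrite trmx_mul trmxK mulmxA. Qed.

Lemma dot_trmxr m n (A : 'M[R]_(m, n)) (u : 'cV[R]_n) (v : 'cV[R]_m) :
  '[u, A^T *m v] = '[A *m u, v].
Proof. by rewrite dotC dot_trmxl dotC. Qed.

Lemma dotDl n (u v w : 'cV[R]_n) : '[u + v, w] = '[u, w] + '[v, w].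
Proof. by rewrite linearD mulmxDl mxE. Qed.

Lemma dotZl n a (u w : 'cV[R]_n) : '[a *: u, w] = a * '[u, w].
Proof. by rewrite linearZ -scalemxAl mxE. Qed.

Lemma dotDr n (u v w : 'cV[R]_n) : '[w, u + v] = '[w, u] + '[w, v].
Proof. by rewrite mulmxDr mxE. Qed.

Lemma dotNl n (u w : 'cV[R]_n) : '[- u, w] = - '[u, w].
Proof. by rewrite linearN mulNmx mxE. Qed.

Lemma dotNr n (u w : 'cV[R]_n) : '[w, - u] = - '[w, u].
Proof. by rewrite mulmxN mxE. Qed.

Lemma dotZr n a (u w : 'cV[R]_n) : '[w, a *: u] = a * '[w, u].
Proof. by rewrite -scalemxAr mxE. Qed.

Lemma dot_sumr n I (r : seq I) (P : pred I) (u : 'cV[R]_n) (v : I -> 'cV[R]_n) :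
  '[u, \sum_(i <- r | P i) v i] = \sum_(i <- r | P i) '[u, v i].
Proof. by rewrite mulmx_sumr summxE. Qed.

Lemma dot_suml n I (r : seq I) (P : pred I) (u : I -> 'cV[R]_n) (w : 'cV[R]_n) :
  '[\sum_(i <- r | P i) u i, w] = \sum_(i <- r | P i) '[u i, w].
Proof. by rewrite linear_sum mulmx_suml summxE. Qed.

Lemma dot_deltal n k (w : 'cV[R]_n) : '[delta_mx k (0 : 'I_1), w] = w k 0.
Proof. by rewrite trmx_delta -rowE mxE. Qed.

Lemma dotE n (u v : 'cV[R]_n) : '[u, v] = \sum_k u k 0 * v k 0.
Proof. by rewrite !mxE; apply: eq_bigr => k _; rewrite mxE. Qed.
End DotProduct.

Lemma trmx_exp_sym (R : comPzRingType) n (A : 'M[R]_n) k :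
  A^T = A -> (A ^+ k)^T = A ^+ k.
Proof.
move=> symA; elim: k => [|k IHk]; first by rewrite expr0 trmx1.
by rewrite exprS -mulmxE trmx_mul IHk symA mulmxE -exprSr exprS.
Qed.

Lemma exp_even_gram (R : comPzRingType) n (A : 'M[R]_n) k :
  A^T = A -> ~~ odd k ->
  A ^+ k = (A ^+ k./2)^T *m A ^+ k./2.
Proof.
move=> symA /negbTE k_even.
by rewrite trmx_exp_sym // mulmxE -exprD addnn -[in LHS](odd_double_half k) k_even.
Qed.

Lemma gram_diag_ge0 (R : realDomainType) p n (M : 'M[R]_(p, n)) i : 0 <= (M^T *m M) i i.
Proof. by rewrite mxE sumr_ge0 // => k _; rewrite mxE -expr2 sqr_ge0. Qed.

Lemma psd_dot_ge0 (R : realType) V (D : 'M[R]_V) (u : 'cV[R]_V) : psd D -> 0 <= '[u, D *m u].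
Proof. by rewrite mulmxA; apply. Qed.

Lemma psd_gram_form_ge0 (R : realType) p n V (M : 'M[R]_(p, n)) (D : 'M[R]_V)
    (u : 'I_n -> 'cV[R]_V) :
  psd D -> 0 <= \sum_i \sum_j (M^T *m M) i j * '[u i, D *m u j].
Proof.
move=> psdD; pose w k := \sum_i M k i *: u i.
have -> : \sum_i \sum_j (M^T *m M) i j * '[u i, D *m u j] = \sum_k '[w k, D *m w k].
  transitivity (\sum_k \sum_i \sum_j M k i * M k j * '[u i, D *m u j]).
    rewrite [RHS]exchange_big /=; apply: eq_bigr => i _; rewrite [RHS]exchange_big /=.
    by apply: eq_bigr => j _; rewrite mxE mulr_suml; apply: eq_bigr => k _; rewrite mxE.
  apply: eq_bigr => k _; rewrite dot_suml; apply: eq_bigr => i _.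
  rewrite dotZl mulmx_sumr dot_sumr mulr_sumr; apply: eq_bigr => j _.
  by rewrite -scalemxAr dotZr mulrA [M k i * _]mulrC.
by apply: sumr_ge0 => k _; exact: psd_dot_ge0.
Qed.

Section Calculus.
Variable R : realType.

Lemma is_derive_affine (a c : R) : is_derive (0 : R) 1 (fun s : R => a + s * c) c.
Proof.
have := @is_deriveD R R R (cst a) (fun s : R => s * c) 0 1 0 c.
rewrite add0r; apply.
have := @is_deriveM R R (@id R) (cst c) 0 1 1 0.
by rewrite /= scaler0 add0r [_ *: _]mulr1; apply.
Qed.

Lemma is_derive_affine_comp (g : R -> R) (a c : R) : derivable g a 1 ->
  is_derive (0 : R) 1 (fun s => g (a + s * c)) (derive1 g a * c).
Proof.
move=> dg; have := is_derive1_comp (f := g) (g := fun s => a + s * c) (x := 0).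
rewrite mul0r addr0; apply; last exact: is_derive_affine.
by apply: DeriveDef; rewrite // derive1E.
Qed.

Lemma is_derive_quadratic0 (a b c : R) :
  is_derive (0 : R) 1 (fun s : R => a + s * (b + s * c)) b.
Proof.
have := @is_deriveD R R R (cst a) (fun s : R => s * (b + s * c)) 0 1 0 b.
rewrite add0r; apply.
have := @is_deriveM R R (@id R) (fun s : R => b + s * c) 0 1 1 c.
rewrite /= mul0r addr0 [_ *: c]mul0r add0r [_ *: _]mulr1; apply => //.
exact: is_derive_affine.
Qed.

Lemma is_derive_dot_path n (P0 P1 V0 V1 : 'cV[R]_n) :
  is_derive (0 : R) 1 (fun s => '[P0 + s *: P1, V0 + s *: V1]) ('[P1, V0] + '[P0, V1]).
Proof.
have -> : (fun s => '[P0 + s *: P1, V0 + s *: V1])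
        = fun s => '[P0, V0] + s * ('[P1, V0] + '[P0, V1] + s * '[P1, V1]).
  by apply/funext => s; rewrite !(dotDl, dotDr, dotZl, dotZr); ring.
exact: is_derive_quadratic0.
Qed.

Lemma is_derive_sum_coord_path n (phi : 'I_n -> R -> R) (z : 'cV[R]_n) k :
  (forall j, derivable (phi j) (z j 0) 1) ->
  is_derive (0 : R) 1 (fun s => \sum_j phi j ((z + s *: delta_mx k 0) j 0))
    (derive1 (phi k) (z k 0)).
Proof.
move=> dphi.
have -> : (fun s => \sum_j phi j ((z + s *: delta_mx k 0) j 0))
        = \sum_j (fun s => phi j (z j 0 + s * (j == k)%:R)).
  by apply/funext => s; rewrite fct_sumE; apply: eq_bigr => j _; rewrite !mxE eqxx andbT.
apply: is_derive_eq; first by apply: is_derive_sum => j; exact: is_derive_affine_comp.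
by rewrite (bigD1 k) //= eqxx mulr1 big1 ?addr0 // => j /negbTE ->; rewrite mulr0.
Qed.

Lemma grad_partialsE n (f : 'cV[R]_n -> R) (z g : 'cV[R]_n) :
  (forall k, is_derive (0 : R) 1 (fun s => f (z + s *: delta_mx k 0)) (g k 0)) ->
  grad f z = g.
Proof. by move=> dfg; apply/matrixP => k j; rewrite ord1 mxE derive1E derive_val. Qed.

Lemma strongly_concave_tangent (g : R -> R) (a b mu x y : R) :
  (forall x y l, a <= x <= b -> a <= y <= b -> 0 <= l <= 1 ->
    l * g x + (1 - l) * g y + mu / 2 * l * (1 - l) * (x - y) ^+ 2
      <= g (l * x + (1 - l) * y)) ->
  derivable g x 1 -> a <= x <= b -> a <= y <= b ->
  g y - g x + mu / 2 * (y - x) ^+ 2 <= (y - x) * derive1 g x.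
Proof.
move=> sc dg xab yab; set K := mu / 2 * (y - x) ^+ 2.
(* Concavity at weight h, divided by h, bounds the difference quotient q h of g at x
   in direction y - x from below by g y - g x + K - h K; let h tend to 0+. *)
pose q h := h^-1 *: ((g \o shift x) (h *: (y - x)) - g x).
have q_cvg : q @ 0^' --> (y - x) * derive1 g x.
  have dgv : derivable g x (y - x) by apply/diff_derivable/derivable1_diffP.
  have -> : (y - x) * derive1 g x = 'D_(y - x) g x.
    by rewrite deriveE ?(deriv1E dg) //; exact/derivable1_diffP.
  exact: dgv.
have qK_cvg : (fun h => q h + h * K) @ 0^'+ --> (y - x) * derive1 g x + 0 * K.
  apply: cvgD; last by apply: cvg_at_right_filter; exact: cvgMr_tmp cvg_id.
  by apply: cvg_trans q_cvg; apply: cvg_app; apply: within_subset => h /= /lt0r_neq0.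
rewrite mul0r addr0 in qK_cvg.
rewrite -(cvg_lim _ qK_cvg) //; apply: limr_ge; first exact: cvgP qK_cvg.
near=> h.
have h0 : 0 < h by near: h; exact: nbhs_right_gt.
have h1 : h <= 1 by near: h; apply: nbhs_right_le; exact: ltr01.
have := sc y x h yab xab; rewrite (ltW h0) h1 => /(_ isT).
have -> : h * y + (1 - h) * x = h *: (y - x) + x by rewrite [_ *: _]/GRing.scale /=; ring.
rewrite /q /= [_ *: _]/GRing.scale /= -/K.
have -> : mu / 2 * h * (1 - h) * (y - x) ^+ 2 = h * K - h * (h * K) by rewrite /K; ring.
move=> conc; rewrite [_ *: _]/GRing.scale /= -(ler_pM2l h0) [in leRHS]mulrDr.
rewrite mulrA mulfV ?gt_eqF // mul1r.
lra.
Unshelve. all: by end_near.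
Qed.

Lemma strongly_concave_derive_mono (g : R -> R) (a b : R) :
  strongly_concave_on g a b -> (forall t, derivable g t 1) ->
  exists2 mu : R, 0 < mu & forall x y, a <= x <= b -> a <= y <= b ->
    mu * (x - y) ^+ 2 <= (derive1 g y - derive1 g x) * (x - y).
Proof.
move=> [mu mu0 conc] dg; exists mu => // x y xab yab.
have := strongly_concave_tangent conc (dg x) xab yab.
have := strongly_concave_tangent conc (dg y) yab xab.
rewrite -[(y - x) ^+ 2]sqrrN opprB; lra.
Qed.

Lemma uniform_strongly_concave_derive_mono (I : finType) (g : I -> R -> R) (a b : I -> R) :
  (forall i, strongly_concave_on (g i) (a i) (b i)) -> (forall i t, derivable (g i) t 1) ->
  exists2 mu : R, 0 < mu & forall i x y, a i <= x <= b i -> a i <= y <= b i ->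
    mu * (x - y) ^+ 2 <= (derive1 (g i) y - derive1 (g i) x) * (x - y).
Proof.
move=> conc dg.
have /choice[mu mu_mono] : forall i, exists mu : R, 0 < mu /\
    forall x y, a i <= x <= b i -> a i <= y <= b i ->
      mu * (x - y) ^+ 2 <= (derive1 (g i) y - derive1 (g i) x) * (x - y).
  by move=> i; have [mu ? ?] := strongly_concave_derive_mono (conc i) (dg i); exists mu.
exists (\big[Num.min/1]_i mu i).
  by apply: lt_bigmin => // i _; case: (mu_mono i).
move=> i x y xab yab; apply: le_trans (proj2 (mu_mono i) x y xab yab).
by rewrite ler_wpM2r ?sqr_ge0 // bigmin_le.
Qed.
End Calculus.

Section PlayerGradient.
Variables (R : realType) (n V : nat) (phi : 'I_n -> R -> R) (H : 'M[R]_(V, n))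
  (D : 'M[R]_V) (d : 'cV[R]_V).

(* The term [a *: (D^T *m (H *m z))] is the price response to the player's own
   supply, [a] being its own weight in the aggregate [sigma]. *)
Definition cournot_grad (a : R) (z : 'cV[R]_n) (sigma : 'cV[R]_V) : 'cV[R]_n :=
  \col_k derive1 (phi k) (z k 0) + H^T *m (a *: (D^T *m (H *m z)) + D *m sigma - d).

Lemma grad_cournot_objective (a : R) (S : 'cV[R]_V) (z : 'cV[R]_n) :
  (forall k, derivable (phi k) (z k 0) 1) ->
  grad (fun w => \sum_k phi k (w k 0) - '[- (D *m (a *: (H *m w) + S)) + d, H *m w]) z
  = cournot_grad a z (a *: (H *m z) + S).
Proof.
move=> dphi; apply: grad_partialsE => k; set e := delta_mx k 0.
set sigma := a *: (H *m z) + S.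
pose P0 := - (D *m sigma) + d; pose P1 := - (a *: (D *m (H *m e))).
have price_path s : - (D *m (a *: (H *m (z + s *: e)) + S)) + d = P0 + s *: P1.
  have -> : H *m (z + s *: e) = H *m z + s *: (H *m e) by rewrite mulmxDr -scalemxAr.
  have -> : a *: (H *m z + s *: (H *m e)) + S = sigma + s *: (a *: (H *m e)).
    by rewrite scalerDr !scalerA mulrC addrAC.
  by rewrite mulmxDr -!scalemxAr opprD addrAC /P0 /P1 scalerN.
have -> : (fun s => \sum_j phi j ((z + s *: e) j 0)
                    - '[- (D *m (a *: (H *m (z + s *: e)) + S)) + d, H *m (z + s *: e)])
        = (fun s => \sum_j phi j ((z + s *: e) j 0))
          - (fun s => '[P0 + s *: P1, H *m z + s *: (H *m e)]).
  by apply/funext => s; rewrite price_path mulmxDr -scalemxAr.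
apply: is_derive_eq.
    exact: is_deriveB (is_derive_sum_coord_path k dphi) (is_derive_dot_path _ _ _ _).
rewrite /cournot_grad [RHS]mxE [in RHS]mxE -[(H^T *m _) k 0]dot_deltal dot_trmxr -/e.
rewrite /P0 /P1 !(dotDl, dotDr, dotNl, dotNr, dotZl, dotZr) -dot_trmxr.
by rewrite (dotC (D *m sigma)) (dotC d); ring.
Qed.

Lemma cournot_grad_inner (a : R) (z z' : 'cV[R]_n) (s s' : 'cV[R]_V) :
  '[cournot_grad a z s - cournot_grad a z' s', z - z']
  = \sum_k (derive1 (phi k) (z k 0) - derive1 (phi k) (z' k 0)) * (z k 0 - z' k 0)
    + a * '[H *m (z - z'), D *m (H *m (z - z'))] + '[H *m (z - z'), D *m (s - s')].
Proof.
rewrite /cournot_grad opprD addrACA -mulmxBr dotDl dot_trmxl.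
have -> : a *: (D^T *m (H *m z)) + D *m s - d - (a *: (D^T *m (H *m z')) + D *m s' - d)
        = a *: (D^T *m (H *m (z - z'))) + D *m (s - s').
  rewrite !mulmxBr scalerBr.
  move: (D^T *m (H *m z)) (D^T *m (H *m z')) (D *m s) (D *m s') => A A' B B'.
  by apply/matrixP => i j; rewrite !mxE; ring.
rewrite [X in _ + X]dotDl dotZl dot_trmxl (dotC (D *m _)) addrA; congr (_ + _ + _).
by rewrite dotE; apply: eq_bigr => k _; rewrite !mxE.
Qed.
End PlayerGradient.

(* Coordinate [k] of a strategy [x = [t; r]] is an edge flow for [k < E] and the
   production for [k = E]. *)
Definition component_case (T : Type) (E : nat) (onE : 'I_E -> T) (onr : T)
    (k : 'I_(E + 1)) : T :=
  if fintype.split k is inl e then onE e else onr.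

Definition cost (R : realType) (b : R) (g : R -> R) (t : R) : R := b * t - g t.

Lemma is_derive_cost (R : realType) (b : R) (g : R -> R) t :
  derivable g t 1 -> is_derive t 1 (cost b g) (b - derive1 g t).
Proof.
move=> dg; apply: is_deriveB; last by apply: DeriveDef; rewrite // derive1E.
have := @is_deriveM R R (cst b) id t 1 0 1.
by rewrite scaler0 addr0 [_ *: _]mulr1; apply.
Qed.

Lemma JcostE (R : realType) V E (B : 'M[R]_(V, E)) l bA gA bE gE p z1 z2 :
  Jcost B l bA gA bE gE p z1 z2
  = \sum_k cost (component_case bE bA k) (component_case gE gA k) (z1 k 0)
    - '[p z2, Hmat B l *m z1].
Proof.
rewrite /Jcost big_split_ord big_ord1 [X in X - _ = _]addrC /component_case; congr (_ + _ - _).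
  by apply: eq_bigr => e _; rewrite (unsplitK (inl _ e) : fintype.split (lshift 1 e) = inl e).
by rewrite (unsplitK (inr _ ord0) : fintype.split (rshift E ord0) = inr ord0).
Qed.

Section CournotGame.
Variables (R : realType) (N V E : nat) (B : 'M[R]_(V, E)) (loc : 'I_N -> 'I_V)
  (betaA : 'I_N -> R) (gammaA : 'I_N -> R -> R)
  (betaE : 'I_N -> 'I_E -> R) (gammaE : 'I_N -> 'I_E -> R -> R)
  (D : 'M[R]_V) (d : 'cV[R]_V) (Tn : 'M[R]_N).

Local Notation H i := (Hmat B (loc i)).
Local Notation gamma i k := (component_case (gammaE i) (gammaA i) k).
Local Notation F := (Fop (fun i => Jcost B (loc i) (betaA i) (gammaA i) (betaE i) (gammaE i)
                                 (fun s => - (D *m s) + d))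
                        (fun i => Hmat B (loc i)) Tn).

Definition player_cost i k := cost (component_case (betaE i) (betaA i) k) (gamma i k).

Hypothesis gamma_derivable : forall i k t, derivable (gamma i k) t 1.

Lemma derive1_player_cost i k t :
  derive1 (player_cost i k) t = component_case (betaE i) (betaA i) k - derive1 (gamma i k) t.
Proof.
by rewrite derive1E (@derive_val _ _ _ _ _ _ _ (is_derive_cost _ (@gamma_derivable i k t))).
Qed.

Lemma FopE x i :
  F x i = cournot_grad (player_cost i) (H i) D d (Tn i i) (x i)
            (\sum_j Tn i j *: (H j *m x j)).
Proof.
rewrite /Fop (bigD1 i) //= -grad_cournot_objective; last first.
  by move=> k; apply: ex_derive; exact: is_derive_cost.
by congr grad; apply/funext => w; rewrite /local_obj JcostE.
Qed.

Lemma Fop_inner x y i :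
  '[F x i - F y i, x i - y i]
  = \sum_k (derive1 (gamma i k) (y i k 0) - derive1 (gamma i k) (x i k 0))
            * (x i k 0 - y i k 0)
    + Tn i i * '[H i *m (x i - y i), D *m (H i *m (x i - y i))]
    + \sum_j Tn i j * '[H i *m (x i - y i), D *m (H j *m (x j - y j))].
Proof.
rewrite !FopE cournot_grad_inner; congr (_ + _ + _).
  by apply: eq_bigr => k _; rewrite !derive1_player_cost; ring.
rewrite -sumrB mulmx_sumr dot_sumr; apply: eq_bigr => j _.
by rewrite -scalerBr -mulmxBr -scalemxAr dotZr.
Qed.
End CournotGame.

Theorem lemma4 (R : realType) (N V E : nat) (B : 'M[R]_(V, E))
  (loc : 'I_N -> 'I_V) (rbar : 'I_N -> R)
  (betaA : 'I_N -> R) (gammaA : 'I_N -> R -> R)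
  (betaE : 'I_N -> 'I_E -> R) (gammaE : 'I_N -> 'I_E -> R -> R)
  (T : 'M[R]_N) (D : 'M[R]_V) (d : 'cV[R]_V) (nu : nat) :
  is_incidence B ->
  (forall i, 0 < rbar i) ->
  (forall i, cost_ok (betaA i) (gammaA i) (rbar i)) ->
  (forall i e, cost_ok (betaE i e) (gammaE i e) (rbar i)) ->
  doubly_stochastic T -> primitive_mx T ->
  psd D ->
  T^T = T ->
  ~~ odd nu ->
  strongly_monotone_on
    (Fop (fun i => Jcost B (loc i) (betaA i) (gammaA i) (betaE i) (gammaE i)
                     (fun s => - (D *m s) + d))
         (fun i => Hmat B (loc i)) (T ^+ nu))
    (feasible (fun i => Hmat B (loc i)) rbar).
Proof.
move=> _ _ costA costE _ _ psdD symT nu_even.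
pose gamma (p : 'I_N * 'I_(E + 1)) := component_case (gammaE p.1) (gammaA p.1) p.2.
have cost_ok_gamma p :
    cost_ok (component_case (betaE p.1) (betaA p.1) p.2) (gamma p) (rbar p.1).
  by rewrite /gamma /component_case; case: fintype.split.
have dgamma p t : derivable (gamma p) t 1 by case: (cost_ok_gamma p) => [[+ _] _ _ _]; apply.
have conc p : strongly_concave_on (gamma p) 0 (rbar p.1) by case: (cost_ok_gamma p).
have [alpha alpha_gt0 gamma'_mono] := uniform_strongly_concave_derive_mono conc dgamma.
exists alpha => // x y feas_x feas_y.
have dgamma' i k t : derivable (component_case (gammaE i) (gammaA i) k) t 1 := dgamma (i, k) t.
rewrite (eq_bigr _ (fun i _ => Fop_inner B loc betaA betaE D d (T ^+ nu) dgamma' x y i)).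
rewrite !big_split /= -addrA; apply: ler_wpDr.
  have Tnu_gram := exp_even_gram symT nu_even.
  apply: addr_ge0; last by rewrite Tnu_gram; exact: psd_gram_form_ge0.
  apply: sumr_ge0 => i _; apply: mulr_ge0; last exact: psd_dot_ge0.
  by rewrite Tnu_gram gram_diag_ge0.
rewrite mulr_sumr; apply: ler_sum => i _; rewrite mulr_sumr; apply: ler_sum => k _.
by apply: (gamma'_mono (i, k)); apply/andP; [exact: (feas_x i).1 k | exact: (feas_y i).1 k].
Qed.
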